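(* For $n\ge1$ and $0\le k\le n-1$, let $a_{n,k}$ be the number of $\pi\in\mathfrak{A}_{2n}(231)$ with $\pi(2n)=n+k+1$. Then $$a_{n,k}=\frac{n-k}{n}\binom{n-1+k}{k}.$$
   Context: $\mathfrak{A}_{2n}(231)$ is the set of permutations $\pi$ of $[2n]$ that are alternating (up-down), i.e. $\pi(1)<\pi(2)>\pi(3)<\cdots>\pi(2n-1)<\pi(2n)$, and avoid the classical pattern $231$. *)

From HB Require Import structures.
From mathcomp Require Import all_boot all_order all_algebra all_fingroup.
Set Implicit Arguments. Unset Strict Implicit. Unset Printing Implicit Defensive.

(* Permutations of [m] are modelled as s : 'S_m acting on 'I_m = {0,..,m-1};
   the paper's pi corresponds to pi(i) = s(i-1) + 1 (shift by one in both
   positions and values). *)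

(* up-down alternating: pi(1) < pi(2) > pi(3) < ... ; with 0-based positions,
   position i (0-based) ascends to i+1 if i is even, descends if i is odd. *)
Definition alternating (m : nat) (s : 'S_m) : bool :=
  [forall i : 'I_m, forall j : 'I_m, (val j == (val i).+1) ==>
    (if odd (val i) then s j < s i else s i < s j)].

Definition avoids231 (m : nat) (s : 'S_m) : bool :=
  ~~ [exists i : 'I_m, exists j : 'I_m, exists k : 'I_m,
        [&& i < j, j < k, s k < s i & s i < s j]].

(* a_{n,k}: number of pi in A_{2n}(231) with pi(2n) = n+k+1,
   i.e. s(2n-1) = n+k in 0-based terms *)
Definition a_nk (n k : nat) : nat :=
  #|[set s : 'S_(n.*2) | [&& alternating s, avoids231 s &
      [exists l : 'I_(n.*2), (val l == n.*2.-1) && (val (s l) == n + k)]] ]|.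

From mathcomp Require Import all_boot all_order all_algebra all_fingroup.
From mathcomp Require Import zify.
Set Implicit Arguments. Unset Strict Implicit. Unset Printing Implicit Defensive.
Import GRing.Theory Num.Theory.

(* Cutting an alternating 231-avoiding permutation at its maximum writes it as
   [alpha m beta]: the maximum sits at a peak, so [alpha] has odd length, and
   avoiding 231 forces every entry of [alpha] below every entry of [beta]; both
   parts are again alternating and 231-avoiding, and the cut is reversible.
   Hence the numbers [c j] of such permutations of length [2j+1] satisfy the
   Catalan recurrence, and those of length [2n] ending with [v] are counted by
   the coefficient of [x^n] in [(x c(x))^(2n-v)].  As [x c = x + (x c)^2], these
   coefficients satisfy a Pascal-type recurrence solved by the ballot numbers. *)

Definition up_down (s : seq nat) := forall i, i.+1 < size s ->
  if odd i then nth 0 s i.+1 < nth 0 s i else nth 0 s i < nth 0 s i.+1.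

Definition avoids231_seq (s : seq nat) := forall i j k, i < j -> j < k -> k < size s ->
  ~ (nth 0 s k < nth 0 s i /\ nth 0 s i < nth 0 s j).

Definition alt231 m (s : seq nat) :=
  [/\ uniq s, size s = m, all (fun x => x < m) s, up_down s & avoids231_seq s].

Definition join_max (a b : seq nat) := a ++ (size a + size b) :: map (addn (size a)) b.

Lemma size_join_max (a b : seq nat) : size (join_max a b) = (size a + size b).+1.
Proof. by rewrite /join_max size_cat /= size_map; lia. Qed.

Lemma nth_join_max (a b : seq nat) i : i < (size a + size b).+1 ->
  nth 0 (join_max a b) i = if i < size a then nth 0 a i else
     if i == size a then size a + size b else size a + nth 0 b (i - (size a).+1).
Proof.
move=> hi; rewrite /join_max nth_cat; case: ltnP => // h.
case: eqP => [->|ne]; first by rewrite subnn.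
have -> : i - size a = (i - (size a).+1).+1 by lia.
by rewrite /= (nth_map 0) //; lia.
Qed.

Lemma last_join_max x (a b : seq nat) : last x (join_max a b) = size a + last (size b) b.
Proof. by rewrite /join_max last_cat /= last_map. Qed.

Lemma join_max_inj (a b a' b' : seq nat) : all (fun x => x < size a) a ->
  all (fun x => x < size a') a' -> join_max a b = join_max a' b' -> a = a' /\ b = b'.
Proof.
move=> aa aa' e.
have index_max u v : all (fun x => x < size u) u -> index (size u + size v) (join_max u v) = size u.
  move=> au; rewrite /join_max index_cat ifN /= ?eqxx ?addn0 //.
  by apply/negP => /(allP au); lia.
have ss : size a + size b = size a' + size b'.
  by have := congr1 size e; rewrite !size_join_max => -[].
have sa : size a = size a' by rewrite -(index_max a b aa) -(index_max a' b' aa') e ss.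
move: e; rewrite /join_max => /eqP; rewrite eqseq_cat // => /andP [/eqP -> /eqP [_]].
by move=> /(inj_map (@addnI _)) ->.
Qed.

Lemma alt231_lt m (s : seq nat) i : alt231 m s -> i < m -> nth 0 s i < m.
Proof. by case=> _ hs /allP ha _ _ hi; apply: ha; apply: mem_nth; rewrite hs. Qed.

Lemma up_down_join_max (a b : seq nat) : odd (size a) ->
  alt231 (size a) a -> alt231 (size b) b -> up_down (join_max a b).
Proof.
move=> oa va vb; have nA := alt231_lt va; have nB := alt231_lt vb.
case: va => _ _ _ alta _; case: vb => _ _ _ altb _.
move=> i; rewrite size_join_max => hi; rewrite !nth_join_max //; last lia.
case: (ltnP i.+1 (size a)) => h1; first by rewrite (_ : i < size a); [apply: alta | lia].
case: (ltnP i (size a)) => h2.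
  have ei : i.+1 = size a by lia.
  have -> : odd i = false by move: oa; rewrite -ei /=; case: (odd i).
  by rewrite ei eqxx; have := nA i h2; lia.
case: (eqVneq i (size a)) => [->|ne].
  rewrite oa (_ : (size a).+1 == size a = false) ?subnn; last lia.
  by have := nB 0; lia.
rewrite (_ : i.+1 == size a = false); last lia.
rewrite (_ : i.+1 - (size a).+1 = (i - (size a).+1).+1); last lia.
have -> : odd i = odd (i - (size a).+1).
  have -> : i = (i - (size a).+1) + (size a).+1 by lia.
  by rewrite addnK oddD /= oa; case: (odd _).
by have := altb (i - (size a).+1); case: (odd _); lia.
Qed.

Lemma avoids231_join_max (a b : seq nat) :
  alt231 (size a) a -> alt231 (size b) b -> avoids231_seq (join_max a b).
Proof.
move=> va vb; have nA := alt231_lt va; have nB := alt231_lt vb.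
case: va => _ _ _ _ ava; case: vb => _ _ _ _ avb.
move=> i j k hij hjk; rewrite size_join_max => hk; rewrite !nth_join_max; try lia.
case: (ltnP k (size a)) => hka.
  by rewrite (_ : i < size a) 1?(_ : j < size a) //; [apply: ava | lia | lia].
case: (eqVneq k (size a)) => [ek|nek].
  by rewrite (_ : i < size a); [have := nA i; lia | lia].
have := nB (k - (size a).+1); have := nB (j - (size a).+1); have := nB (i - (size a).+1).
case: (ltnP i (size a)) => hia; first by have := nA i hia; lia.
rewrite (_ : (j < size a) = false); last lia.
rewrite (_ : (j == size a) = false); last lia.
case: (eqVneq i (size a)) => [ei|nei]; first lia.
by move=> _ _ _ [h1 h2]; apply: (avb (i - (size a).+1) (j - (size a).+1) (k - (size a).+1)); lia.
Qed.

Lemma alt231_join_max (a b : seq nat) : odd (size a) ->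
  alt231 (size a) a -> alt231 (size b) b -> alt231 (size a + size b).+1 (join_max a b).
Proof.
move=> oa va vb; split; [|exact: size_join_max| |exact: up_down_join_max|exact: avoids231_join_max].
  case: va => ua _ aa _ _; case: vb => ub _ ab _ _.
  rewrite /join_max cat_uniq ua /= (map_inj_uniq (@addnI (size a))) ub.
  rewrite andbT negb_or -andbA; apply/and3P; split.
  - by apply/negP => /(allP aa) /=; lia.
  - apply/hasPn => z /mapP [y yb ->]; apply/negP=> /(allP aa) /=; lia.
  - apply/negP=> /mapP [y]; move/(allP ab) => /=; lia.
case: va => _ _ aa _ _; case: vb => _ _ ab _ _.
apply/allP => x; rewrite /join_max mem_cat => /orP [/(allP aa) /=|]; first lia.
rewrite inE => /orP [/eqP ->|/mapP [y /(allP ab) /= yb ->]]; lia.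
Qed.

Lemma up_down_join_max_inv (a b : seq nat) : odd (size a) ->
  up_down (join_max a b) -> up_down a /\ up_down b.
Proof.
move=> oa h; split.
  move=> i hi; have := h i; rewrite size_join_max !nth_join_max; try lia.
  by rewrite hi (_ : i < size a); [apply; lia|lia].
move=> i hi; have := h (i + (size a).+1); rewrite size_join_max !nth_join_max; try lia.
rewrite (_ : (i + (size a).+1 < size a) = false); last lia.
rewrite (_ : (i + (size a).+1).+1 < size a = false); last lia.
rewrite (_ : (i + (size a).+1 == size a) = false); last lia.
rewrite (_ : ((i + (size a).+1).+1 == size a) = false); last lia.
rewrite addnK (_ : (i + (size a).+1).+1 - (size a).+1 = i.+1); last lia.
by rewrite oddD /= oa /=; case: (odd i) => /=; move/(_ ltac:(lia)); lia.
Qed.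

Lemma avoids231_join_max_inv (a b : seq nat) :
  avoids231_seq (join_max a b) -> avoids231_seq a /\ avoids231_seq b.
Proof.
move=> h; split.
  move=> i j k hij hjk hk; have := h i j k hij hjk.
  rewrite size_join_max !nth_join_max; try lia.
  by rewrite (_ : i < size a) 1?(_ : j < size a) 1?(_ : k < size a) //; [apply; lia|lia..].
move=> i j k hij hjk hk.
have := h (i + (size a).+1) (j + (size a).+1) (k + (size a).+1).
rewrite size_join_max !nth_join_max; try lia.
rewrite (_ : (i + (size a).+1 < size a) = false); last lia.
rewrite (_ : (j + (size a).+1 < size a) = false); last lia.
rewrite (_ : (k + (size a).+1 < size a) = false); last lia.
rewrite (_ : (i + (size a).+1 == size a) = false); last lia.
rewrite (_ : (j + (size a).+1 == size a) = false); last lia.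
rewrite (_ : (k + (size a).+1 == size a) = false); last lia.
by rewrite !addnK => /(_ ltac:(lia) ltac:(lia) ltac:(lia)) H [h1 h2]; apply: H; lia.
Qed.

Lemma uniq_size_le_range (s : seq nat) lo hi :
  uniq s -> all (fun x => lo <= x < hi) s -> size s <= hi - lo.
Proof.
move=> us /allP sr; rewrite -(size_iota lo (hi - lo)).
by apply: uniq_leq_size => // x /sr; rewrite mem_iota; lia.
Qed.

Lemma mem_alt231 m (s : seq nat) v : alt231 m s -> v < m -> v \in s.
Proof.
case=> us sm /allP sr _ _ vm.
have [_ ->] : (size s = size (iota 0 m)) * (s =i iota 0 m).
  by apply: uniq_min_size => // [x /sr|]; rewrite ?mem_iota ?size_iota ?sm.
by rewrite mem_iota.
Qed.

Section Decomposition.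

Variables (m : nat) (l : seq nat).
Hypotheses (hl : alt231 m l) (m_gt1 : 1 < m).

Let p := index m.-1 l.

Let size_l : size l = m. Proof. by case: hl. Qed.

Lemma max_index_lt : p < m.
Proof. by rewrite -size_l index_mem; apply: mem_alt231 hl _; lia. Qed.

Lemma nth_max_index : nth 0 l p = m.-1.
Proof. by apply: nth_index; apply: mem_alt231 hl _; lia. Qed.

Lemma nth_lt_max i : i < m -> i != p -> nth 0 l i < m.-1.
Proof.
move=> im ip; have := alt231_lt hl im; rewrite -nth_max_index.
have : nth 0 l i != nth 0 l p.
  by case: hl => ul _ _ _ _; rewrite nth_uniq ?size_l ?max_index_lt.
by rewrite nth_max_index; lia.
Qed.

Lemma odd_max_index : odd p.
Proof.
apply/negPn/negP => pe; case: hl => _ _ _ alt _.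
have pm := max_index_lt; have lp := nth_max_index.
case: (ltnP p.+1 m) => h.
  have := alt p; rewrite size_l (negbTE pe) lp => /(_ h).
  by have := nth_lt_max h; rewrite (_ : p.+1 != p); lia.
have pp : 0 < p by lia.
have := alt p.-1; rewrite size_l prednK // => /(_ pm).
rewrite (_ : odd p.-1); last by move: pe; rewrite -{1}(prednK pp) /=; case: (odd _).
by rewrite lp; have := @nth_lt_max p.-1; rewrite (_ : p.-1 != p); lia.
Qed.

(* The maximum plays the role of the 3 in a 231. *)
Lemma nth_lt_across i k : i < p -> p < k -> k < m -> nth 0 l i < nth 0 l k.
Proof.
move=> ip pk km; case: hl => ul _ _ _ av.
have := av i p k ip pk; rewrite size_l nth_max_index => /(_ km).
have := @nth_lt_max i; have : nth 0 l i != nth 0 l k by rewrite nth_uniq ?size_l; lia.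
by move=> /eqP ne /(_ ltac:(lia) ltac:(lia)); lia.
Qed.

Lemma nth_prefix_lt i : i < p -> nth 0 l i < p.
Proof.
move=> ip; have pm := max_index_lt.
have : size (drop p l) <= m - (nth 0 l i).+1.
  apply: uniq_size_le_range; first by apply: drop_uniq; case: hl.
  apply/allP => x /(nthP 0) [k]; rewrite size_drop size_l nth_drop => km <- /=.
  have := alt231_lt hl (i := p + k); have := @nth_lt_across i (p + k).
  case: (eqVneq k 0) => [->|]; last lia.
  by rewrite addn0 nth_max_index; have := @nth_lt_max i; lia.
by rewrite size_drop size_l; lia.
Qed.

Lemma nth_suffix_ge k : p < k -> k < m -> p <= nth 0 l k.
Proof.
move=> pk km; have pm := max_index_lt.
have : size (take p l) <= nth 0 l k - 0.
  apply: uniq_size_le_range; first by apply: take_uniq; case: hl.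
  apply/allP => x /(nthP 0) [i]; rewrite size_take size_l pm => ip <-.
  by rewrite /= nth_take //; have := nth_lt_across ip pk km.
by rewrite size_take size_l pm subn0.
Qed.

Lemma join_max_cut : l = join_max (take p l) (map (subn^~ p) (drop p.+1 l)).
Proof.
have pm := max_index_lt.
apply: (@eq_from_nth _ 0) => [|i]; first by rewrite size_join_max size_map size_drop size_take size_l pm; lia.
rewrite size_l => im; rewrite nth_join_max size_map size_drop size_take size_l pm; last lia.
case: (ltnP i p) => ip; first by rewrite nth_take.
case: (eqVneq i p) => [->|nip]; first by rewrite nth_max_index; lia.
rewrite (nth_map 0); last by rewrite size_drop size_l; lia.
rewrite nth_drop (_ : p.+1 + (i - p.+1) = i); last lia.
by have := @nth_suffix_ge i; lia.
Qed.

Lemma alt231_decomp : exists a b,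
  [/\ l = join_max a b, odd (size a), alt231 (size a) a & alt231 (size b) b].
Proof.
have lj := join_max_cut; set a := take p l; set b := map (subn^~ p) (drop p.+1 l) in lj *.
have sa : size a = p by rewrite size_take size_l max_index_lt.
have sb : size b = m - p.+1 by rewrite size_map size_drop size_l.
have oa : odd (size a) by rewrite sa odd_max_index.
case: hl => ul _ _ alt av.
have [alta altb] : up_down a /\ up_down b.
  by rewrite lj in alt; exact: up_down_join_max_inv.
have [ava avb] : avoids231_seq a /\ avoids231_seq b.
  by rewrite lj in av; exact: avoids231_join_max_inv.
exists a, b; split=> //; split=> //.
- exact: take_uniq.
- by apply/allP => x /(nthP 0) [i]; rewrite sa => ip <-; rewrite nth_take // nth_prefix_lt.
- have ge_p : {in drop p.+1 l, forall x, p <= x}.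
    move=> x /(nthP 0) [k]; rewrite size_drop size_l nth_drop => km <-.
    by apply: nth_suffix_ge; lia.
  rewrite map_inj_in_uniq; first exact: drop_uniq.
  by move=> u v /ge_p hu /ge_p hv /= e; rewrite -(subnK hu) -(subnK hv) e.
- apply/allP => y /mapP [z /(nthP 0) [k]]; rewrite size_drop size_l nth_drop => ks <- ->.
  rewrite sb /=; have := @nth_suffix_ge (p.+1 + k); have := @nth_lt_max (p.+1 + k).
  by rewrite (_ : p.+1 + k != p); lia.
Qed.

End Decomposition.

Definition seq_of_perm m (s : 'S_m) : seq nat := [seq val (s i) | i <- enum 'I_m].

Definition alt231_seqs m : seq (seq nat) :=
  [seq seq_of_perm s | s <- enum 'S_m & alternating s && avoids231 s].

Lemma size_seq_of_perm m (s : 'S_m) : size (seq_of_perm s) = m.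
Proof. by rewrite size_map size_enum_ord. Qed.

Lemma nth_seq_of_perm m (s : 'S_m) (i : 'I_m) : nth 0 (seq_of_perm s) i = s i.
Proof. by rewrite (nth_map i) ?size_enum_ord // nth_ord_enum. Qed.

Lemma seq_of_perm_inj m : injective (@seq_of_perm m).
Proof.
move=> s t e; apply/permP => i; apply/val_inj => /=.
by rewrite -(nth_seq_of_perm s i) -(nth_seq_of_perm t i) e.
Qed.

Lemma alternatingE m (s : 'S_m) : alternating s <-> up_down (seq_of_perm s).
Proof.
rewrite /up_down size_seq_of_perm; split.
  move/forallP => H i hi; have im : i < m by lia.
  have := forallP (H (Ordinal im)) (Ordinal hi); rewrite /= eqxx /=.
  by rewrite -(nth_seq_of_perm s (Ordinal im)) -(nth_seq_of_perm s (Ordinal hi)).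
move=> H; apply/forallP => i; apply/forallP => j; apply/implyP => /eqP hj.
by have := H i; rewrite -hj !nth_seq_of_perm; apply; apply: ltn_ord.
Qed.

Lemma avoids231E m (s : 'S_m) : avoids231 s <-> avoids231_seq (seq_of_perm s).
Proof.
rewrite /avoids231_seq size_seq_of_perm; split.
  move/existsPn => H i j k ij jk km [h1 h2].
  have jm : j < m by lia.
  have im : i < m by lia.
  have := H (Ordinal im); move/existsPn/(_ (Ordinal jm))/existsPn/(_ (Ordinal km)).
  rewrite -(nth_seq_of_perm s (Ordinal im)) -(nth_seq_of_perm s (Ordinal jm)).
  by rewrite -(nth_seq_of_perm s (Ordinal km)) /= ij jk h1 h2.
move=> H; apply/existsPn => i; apply/existsPn => j; apply/existsPn => k.
apply/negP => /and4P [ij jk h1 h2]; apply: (H i j k ij jk (ltn_ord k)).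
by rewrite !nth_seq_of_perm h1 h2.
Qed.

Lemma alt231_seq_of_perm m (s : 'S_m) :
  alternating s -> avoids231 s -> alt231 m (seq_of_perm s).
Proof.
move=> /alternatingE ha /avoids231E hv; split=> //.
- by rewrite /seq_of_perm map_inj_uniq ?enum_uniq // => i j /val_inj; apply: perm_inj.
- exact: size_seq_of_perm.
- by apply/allP => x /mapP [i _ ->]; apply: ltn_ord.
Qed.

Lemma alt231_perm m (l : seq nat) : alt231 m l -> exists s : 'S_m, seq_of_perm s = l.
Proof.
case=> ul sl al _ _.
have lt (i : 'I_m) : nth 0 l i < m by apply: (allP al); apply: mem_nth; rewrite sl.
have finj : injective (fun i : 'I_m => Ordinal (lt i)).
  by move=> i j /(congr1 val) /= /eqP; rewrite nth_uniq ?sl // => /eqP /val_inj.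
exists (perm finj); apply: (@eq_from_nth _ 0); first by rewrite size_seq_of_perm sl.
move=> i; rewrite size_seq_of_perm => im.
by rewrite -[i]/(nat_of_ord (Ordinal im)) nth_seq_of_perm permE.
Qed.

Lemma mem_alt231_seqs m (l : seq nat) : l \in alt231_seqs m <-> alt231 m l.
Proof.
split; first by case/mapP => s; rewrite mem_filter => /andP [/andP [ha hv] _] ->;
  exact: alt231_seq_of_perm.
move=> vl; have [s es] := alt231_perm vl; apply/mapP; exists s => //.
by rewrite mem_filter mem_enum andbT -es in vl *; case: vl => _ _ _ /alternatingE -> /avoids231E ->.
Qed.

Lemma uniq_alt231_seqs m : uniq (alt231_seqs m).
Proof.
rewrite map_inj_uniq; last exact: seq_of_perm_inj.
exact/filter_uniq/enum_uniq.
Qed.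

Lemma card_alt231_perms m (P : pred (seq nat)) :
  #|[set s : 'S_m | [&& alternating s, avoids231 s & P (seq_of_perm s)]]| =
  count P (alt231_seqs m).
Proof.
rewrite cardsE cardE /alt231_seqs count_map count_filter -size_filter enumT /enum_mem !size_filter.
by apply: eq_count => s; rewrite -[LHS]/[&& alternating s, avoids231 s & P (seq_of_perm s)] andbA andbC.
Qed.

Lemma uniq_flatten_map (S T : eqType) (F : S -> seq T) (s : seq S) : uniq s ->
  {in s, forall x, uniq (F x)} ->
  {in s &, forall x y z, z \in F x -> z \in F y -> x = y} -> uniq (flatten (map F s)).
Proof.
elim: s => //= x s IH /andP [xs us] uF dF.
rewrite cat_uniq uF ?mem_head // IH //; last first.
- by move=> y z ys zs; apply: dF; rewrite inE ?ys ?zs orbT.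
- by move=> y ys; apply: uF; rewrite inE ys orbT.
rewrite andbT; apply/hasPn => z /flattenP [t /mapP [y ys ->]] zy.
apply/negP => zx; have e := dF x y (mem_head _ _) _ z zx zy.
by move: xs; rewrite e ?inE ?ys ?orbT.
Qed.

Definition alt231_joins m j : seq (seq nat) :=
  [seq join_max a b | a <- alt231_seqs j.*2.+1, b <- alt231_seqs (m.+1 - j.*2.+1)].

Lemma uniq_alt231_joins m : uniq (flatten [seq alt231_joins m j | j <- iota 0 (m.+2)./2]).
Proof.
have bounded j a : a \in alt231_seqs j -> all (fun x => x < size a) a.
  by move/mem_alt231_seqs => [_ -> ? _ _].
apply: uniq_flatten_map; first exact: iota_uniq.
  move=> j _; apply: allpairs_uniq; rewrite ?uniq_alt231_seqs //.
  move=> [a b] [a' b'] /allpairsP [[u v] /= [/bounded ua _ [-> ->]]].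
  move=> /allpairsP [[u' v'] /= [/bounded ua' _ [-> ->]]] /= e.
  by have [-> ->] := join_max_inj ua ua' e.
move=> j j' _ _ z /allpairsP [[a b] /= [ha _ ->]] /allpairsP [[a' b'] /= [ha' _]].
move=> /(join_max_inj (bounded _ _ ha) (bounded _ _ ha')) [ea _].
have /mem_alt231_seqs [_ sa _ _ _] := ha; have /mem_alt231_seqs [_ + _ _ _] := ha'.
by rewrite -ea sa => /eqP; rewrite eqSS -!muln2 eqn_pmul2r // => /eqP.
Qed.

Lemma mem_alt231_joins m l :
  l \in flatten [seq alt231_joins m j | j <- iota 0 (m.+2)./2] <-> alt231 m.+2 l.
Proof.
split.
  case/flattenP => t /mapP [j]; rewrite mem_iota gtn_half_double => /andP [_ jm] ->.
  case/allpairsP => [[a b] /= [/mem_alt231_seqs va /mem_alt231_seqs vb ->]].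
  have [sa sb] : size a = j.*2.+1 /\ size b = m.+1 - j.*2.+1 by case: va; case: vb.
  rewrite (_ : m.+2 = (size a + size b).+1); last by rewrite sa sb; lia.
  by apply: alt231_join_max; rewrite ?sa ?sb //= odd_double.
move=> hl; have [a [b [el oa va vb]]] := alt231_decomp hl isT.
have sab : (size a + size b).+1 = m.+2 by case: hl => _ <-; rewrite el size_join_max.
rewrite el.
have ea : size a = (size a)./2.*2.+1 by rewrite -[LHS]odd_double_half oa.
apply/flattenP; exists (alt231_joins m (size a)./2).
  by apply/mapP; exists (size a)./2; rewrite // mem_iota gtn_half_double -ea; lia.
apply/allpairsP; exists (a, b); rewrite -ea (_ : m.+1 - size a = size b); last lia.
by split=> //; apply/mem_alt231_seqs.
Qed.

Lemma alt231_seqs_rec m :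
  perm_eq (alt231_seqs m.+2) (flatten [seq alt231_joins m j | j <- iota 0 (m.+2)./2]).
Proof.
apply: uniq_perm (uniq_alt231_seqs _) (uniq_alt231_joins m) _ => l.
by apply/idP/idP => [/mem_alt231_seqs|/mem_alt231_joins] hl;
  [apply/mem_alt231_joins | apply/mem_alt231_seqs].
Qed.

Lemma count_alt231_seqs_rec (P : pred (seq nat)) m : count P (alt231_seqs m.+2) =
  \sum_(j < (m.+2)./2) \sum_(a <- alt231_seqs j.*2.+1)
     count (fun b => P (join_max a b)) (alt231_seqs (m.+1 - j.*2.+1)).
Proof.
rewrite (seq.permP (alt231_seqs_rec m)) count_flatten sumnE !big_map.
rewrite -{1}[(m.+2)./2]subn0 -/(index_iota _ _) big_mkord; apply: eq_bigr => j _.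
by rewrite count_flatten sumnE !big_map; apply: eq_bigr => a _; rewrite count_map.
Qed.

Definition num_alt231_odd j := size (alt231_seqs j.*2.+1).

(* The default [m] of [last] makes [last (join_max a b)] compose as in
   [last_join_max], and gives the empty sequence the last value 0. *)
Definition num_alt231_last (m v : nat) := count (fun l => last m l == v) (alt231_seqs m).

Lemma alt231_seqs_small m : m <= 1 -> perm_eq (alt231_seqs m) [:: iota 0 m].
Proof.
move=> m1; apply: uniq_perm; rewrite ?uniq_alt231_seqs // => l.
rewrite inE; apply/idP/eqP => [/mem_alt231_seqs [_ sl /allP al _ _]|->].
  move: m1 sl al; case: m => [|[|//]] _; first by move/size0nil.
  by case: l => [|x [|]] //= _ /(_ x (mem_head _ _)); rewrite ltnS leqn0 => /eqP ->.
apply/mem_alt231_seqs; split; rewrite ?iota_uniq ?size_iota //.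
- by apply/allP => x; rewrite mem_iota.
- by move=> i; rewrite size_iota; lia.
- by move=> i j k; rewrite size_iota; lia.
Qed.

Lemma num_alt231_odd0 : num_alt231_odd 0 = 1.
Proof. by rewrite /num_alt231_odd (perm_size (alt231_seqs_small _)). Qed.

Lemma num_alt231_last0 (v : nat) : num_alt231_last 0 v = (v == 0).
Proof. by rewrite /num_alt231_last (seq.permP (alt231_seqs_small _)) //= eq_sym addn0. Qed.

Lemma num_alt231_odd_rec i : num_alt231_odd i.+1 =
  \sum_(j < i.+1) num_alt231_odd j * num_alt231_odd (i - j).
Proof.
rewrite /num_alt231_odd -count_predT doubleS count_alt231_seqs_rec.
rewrite (_ : (i.*2.+3)./2 = i.+1); last by rewrite -doubleS /= uphalf_double.
apply: eq_bigr => j _; rewrite (_ : i.*2.+2 - j.*2.+1 = (i - j).*2.+1); last first.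
  by have := ltn_ord j; lia.
rewrite (eq_bigr (fun=> size (alt231_seqs (i - j).*2.+1))) => [|a _]; last exact: count_predT.
by rewrite big_const_seq count_predT iter_addn_0 mulnC.
Qed.

Lemma num_alt231_last_even_rec (n v : nat) : num_alt231_last n.+1.*2 v =
  \sum_(j < n.+1) num_alt231_odd j *
    (if j.*2.+1 <= v then num_alt231_last (n - j).*2 (v - j.*2.+1) else 0).
Proof.
rewrite /num_alt231_last doubleS count_alt231_seqs_rec -doubleS half_double.
apply: eq_bigr => j _; rewrite (_ : n.*2.+1 - j.*2.+1 = (n - j).*2); last first.
  by have := ltn_ord j; lia.
set c := if _ then _ else _.
rewrite (eq_big_seq (fun=> c)) => [|a /mem_alt231_seqs [_ sa _ _ _]].
  by rewrite big_const_seq count_predT iter_addn_0 mulnC.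
rewrite /c /num_alt231_last; case: ltnP => hv.
  apply: eq_in_count => b /mem_alt231_seqs [_ sb _ _ _].
  by rewrite /= last_join_max sa sb; apply/eqP/eqP; lia.
rewrite (eq_count (a2 := pred0)) ?count_pred0 // => b /=.
by rewrite last_join_max sa; apply/eqP; lia.
Qed.

Section SeriesPowers.

Variable c : nat -> nat.

(* [xpow_coef n r] is the coefficient of [x^n] in [(x c(x))^r], where
   [c(x) = \sum_i c i x^i]. *)
Fixpoint xpow_coef (n r : nat) : nat :=
  if r is r'.+1 then \sum_(j < n) c j * xpow_coef (n - j.+1) r' else n == 0.

Lemma xpow_coef_small r n : n < r -> xpow_coef n r = 0.
Proof.
elim: r n => [//|r IH] n nr /=.
by apply: big1 => j _; rewrite IH ?muln0 //; have := ltn_ord j; lia.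
Qed.

Hypothesis c0 : c 0 = 1.

Lemma xpow_coef_diag n : xpow_coef n n = 1.
Proof.
elim: n => [//|n IH]; rewrite /= big_ord_recl subSS subn0 IH c0 big1 // => j _.
by rewrite xpow_coef_small ?muln0 // lift0; have := ltn_ord j; lia.
Qed.

Hypothesis cS : forall i, c i.+1 = \sum_(j < i.+1) c j * c (i - j).

(* Since [c = 1 + x c^2], [(x c)^(r+1) = x (x c)^r + (x c)^(r+2)]. *)
Lemma xpow_coef_pascal r n :
  xpow_coef n r.+1 = xpow_coef n r.+2 + (if n is n'.+1 then xpow_coef n' r else 0).
Proof.
elim: r n => [|r IH] n.
  case: n => [|n]; first by rewrite /= !big_ord0.
  rewrite /= big_ord_recr /= subnn eqxx muln1 big1 ?add0n => [|j _]; last first.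
    by rewrite (_ : (n.+1 - j.+1 == 0) = false) ?muln0 //; have := ltn_ord j; lia.
  rewrite big_ord_recr /= subnn big_ord0 muln0 addn0.
  case: n => [|n]; first by rewrite big_ord0 c0.
  rewrite addn0 cS; apply: eq_bigr => i _; congr (_ * _).
  rewrite (_ : n.+2 - i.+1 = (n - i).+1) /=; last by have := ltn_ord i; lia.
  rewrite big_ord_recr /= subnn eqxx muln1 big1 ?add0n // => j _.
  by rewrite (_ : _ == 0 = false) ?muln0 //; have := ltn_ord j; have := ltn_ord i; lia.
have -> : xpow_coef n r.+2 = \sum_(j < n) c j * xpow_coef (n - j.+1) r.+1 by [].
have -> : xpow_coef n r.+3 = \sum_(j < n) c j * xpow_coef (n - j.+1) r.+2 by [].
under eq_bigr do rewrite IH mulnDr.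
rewrite big_split /=; congr (_ + _).
case: n => [|n]; first by rewrite big_ord0.
rewrite big_ord_recr /= subnn muln0 addn0; apply: eq_bigr => j _.
by rewrite (_ : n.+1 - j.+1 = (n - j.+1).+1) //; have := ltn_ord j; lia.
Qed.

Lemma xpow_coef_ballot k r : 0 < r ->
  xpow_coef (r + k.+1) r + 'C(r + k.*2.+1, k) = 'C(r + k.*2.+1, k.+1).
Proof.
elim: k r => [|k IHk] r.
  elim: r => [//|r IHr] _.
  rewrite addn1 xpow_coef_pascal xpow_coef_diag bin0 bin1.
  by case: r IHr => [//|r] /(_ isT); rewrite addn1 bin0 bin1; lia.
elim: r => [//|r IHr] _.
have h1 := IHk r.+2 isT.
rewrite addSn xpow_coef_pascal (_ : (r + k.+2).+1 = r.+2 + k.+1); last lia.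
rewrite (_ : r.+2 + k.*2.+1 = r + k.*2.+3) in h1; last lia.
rewrite (_ : r.+1 + k.+1.*2.+1 = (r + k.*2.+3).+1) ?binS; last by rewrite doubleS; lia.
case: r IHr h1 => [|r] IHr h1.
  have -> : xpow_coef (0 + k.+2) 0 = 0 by [].
  have := bin_sub (n := 0 + k.*2.+3) (m := k.+1) ltac:(lia).
  by rewrite (_ : 0 + k.*2.+3 - k.+1 = k.+2); lia.
have := IHr isT; rewrite (_ : r.+1 + k.+1.*2.+1 = r.+1 + k.*2.+3); last by rewrite doubleS; lia.
lia.
Qed.

End SeriesPowers.

Lemma num_alt231_last_even n v :
  num_alt231_last n.*2 v = if v <= n.*2 then xpow_coef num_alt231_odd n (n.*2 - v) else 0.
Proof.
elim/ltn_ind: n v => -[_ v|n IH v]; first by rewrite num_alt231_last0; case: v.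
rewrite num_alt231_last_even_rec doubleS.
case: (leqP v n.*2.+1) => hv.
  rewrite (_ : v <= n.*2.+2); last lia.
  rewrite (_ : n.*2.+2 - v = (n.*2.+1 - v).+1); last lia.
  rewrite [RHS]/=; apply: eq_bigr => j _; have jn := ltn_ord j; rewrite subSS.
  case: (leqP j.*2.+1 v) => hj; last by rewrite xpow_coef_small ?muln0 //; lia.
  rewrite IH; last lia.
  rewrite (_ : v - j.*2.+1 <= (n - j).*2); last lia.
  by rewrite (_ : (n - j).*2 - (v - j.*2.+1) = n.*2.+1 - v) //; lia.
rewrite big1 => [|j _]; first by case: ifP => // _; rewrite (_ : n.*2.+2 - v = 0) //; lia.
have jn := ltn_ord j; rewrite (_ : j.*2.+1 <= v); last lia.
rewrite IH; last lia.
by rewrite (_ : v - j.*2.+1 <= (n - j).*2 = false) ?muln0 //; lia.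
Qed.

Lemma num_alt231_last_ballot n k : 0 < n -> k <= n - 1 ->
  num_alt231_last n.*2 (n + k) * n = (n - k) * 'C(n - 1 + k, k).
Proof.
move=> hn hk; rewrite num_alt231_last_even (_ : n + k <= n.*2); last lia.
rewrite (_ : n.*2 - (n + k) = n - k); last lia.
case: k hk => [|k] hk; first by rewrite subn0 xpow_coef_diag ?num_alt231_odd0 // bin0; lia.
have [r er] : exists r, n = r + k.+1 by exists (n - k.+1); lia.
rewrite er (_ : r + k.+1 - k.+1 = r); last lia.
rewrite (_ : r + k.+1 - 1 + k.+1 = r + k.*2.+1); last lia.
have := @xpow_coef_ballot _ num_alt231_odd0 num_alt231_odd_rec k r ltac:(lia).
have := mul_bin_left (r + k.*2.+1) k.
rewrite (_ : r + k.*2.+1 - k = r + k.+1); last lia.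
move: (xpow_coef _ _ _) ('C(_, k)) ('C(_, k.+1)) => g b0 b1.
nia.
Qed.

Lemma last_seq_of_permE m (s : 'S_m) v : 0 < m ->
  [exists i : 'I_m, (val i == m.-1) && (val (s i) == v)] = (last m (seq_of_perm s) == v).
Proof.
move=> m0; have mm : m.-1 < m by rewrite ltn_predL.
rewrite -nth_last size_seq_of_perm (set_nth_default 0) ?size_seq_of_perm //.
rewrite -[m.-1]/(nat_of_ord (Ordinal mm)) nth_seq_of_perm.
apply/existsP/idP => [[i /andP [/eqP ei]]|]; last by exists (Ordinal mm); rewrite eqxx.
by rewrite (_ : i = Ordinal mm) //; apply: val_inj.
Qed.

Theorem proposition5p8 (n k : nat) (hn : (1 <= n)%N) (hk : (k <= n - 1)%N) :
  ((a_nk n k)%:R = ((n - k)%N%:R / n%:R) * ('C(n - 1 + k, k))%:R :> rat)%R.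
Proof.
have -> : a_nk n k = num_alt231_last n.*2 (n + k).
  rewrite /a_nk /num_alt231_last -card_alt231_perms; apply: eq_card => s.
  by rewrite !inE last_seq_of_permE //; lia.
rewrite mulrAC -natrM -num_alt231_last_ballot // natrM mulfK // pnatr_eq0; lia.
Qed.
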